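(* Let $n$ be odd. Then $|RELS(n)|\neq|ROLS(n)|$ if and only if $$\sum_{0\le k,m<n/2}(-1)^{k+m}(n-2k)(n-2m)N_n(k,m)\neq0,$$ where $N_n(k,m)$ is the number of reduced Latin squares of order $n$ of parity type $(k,m)$.
   Context: A Latin square of order $n$ is an $n\times n$ array with entries in $[n]$, each symbol once in each row and column. Rows and columns are viewed as permutations: if symbol $i$ appears in the $j$th place of a row (column) $\sigma$, then $\sigma(i)=j$. $L$ is reduced if its first row and first column are the identity permutation. $\mathrm{par}(L)$ is the product of the signs of all rows and columns; $L$ is even if $\mathrm{par}(L)=1$ and odd if $\mathrm{par}(L)=-1$. $RELS(n)$ and $ROLS(n)$ denote the sets of even and odd reduced Latin squares of order $n$. The parity type of $L$ is $(k,m)$, $0\le k,m\le n/2$, if $k$ of its rows have one sign and the other $n-k$ rows the opposite sign, and $m$ of its columns have one sign and the other $n-m$ columns the opposite sign. *)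

From mathcomp Require Import all_boot all_order all_algebra all_fingroup.
Set Implicit Arguments. Unset Strict Implicit. Unset Printing Implicit Defensive.
Import GRing.Theory.

Definition array (n : nat) := 'M['I_n]_n.

Definition latin n (L : array n) : bool :=
  [forall r : 'I_n, forall s : 'I_n, #|[set j | L r j == s]| == 1%N] &&
  [forall c : 'I_n, forall s : 'I_n, #|[set i | L i c == s]| == 1%N].

Definition reduced n (L : array n) : bool :=
  [forall i : 'I_n, forall j : 'I_n, (val i == 0%N) ==> (L i j == j)] &&
  [forall i : 'I_n, forall j : 'I_n, (val j == 0%N) ==> (L i j == i)].

Definition row_sigma n (L : array n) (r : 'I_n) : option 'S_n :=
  [pick s : 'S_n | [forall j, s (L r j) == j]].
Definition col_sigma n (L : array n) (c : 'I_n) : option 'S_n :=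
  [pick s : 'S_n | [forall i, s (L i c) == i]].

(* sign of a permutation as an integer (+1 / -1); 1 for non-permutations
   (never occurs for Latin squares). *)
Definition osign n (o : option 'S_n) : int :=
  if o is Some s then ((-1) ^+ odd_perm s)%R else 1%R.

Definition par n (L : array n) : int :=
  ((\prod_(r : 'I_n) osign (row_sigma L r)) * (\prod_(c : 'I_n) osign (col_sigma L c)))%R.

Definition RELS n : {set array n} :=
  [set L : array n | latin L && reduced L && (par L == 1%R)].
Definition ROLS n : {set array n} :=
  [set L : array n | latin L && reduced L && (par L == (-1)%R)].

Definition n_odd_rows n (L : array n) : nat :=
  #|[set r : 'I_n | osign (row_sigma L r) == (-1)%R]|.
Definition n_odd_cols n (L : array n) : nat :=
  #|[set c : 'I_n | osign (col_sigma L c) == (-1)%R]|.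

Definition parity_type n (L : array n) (k m : nat) : bool :=
  [&& k.*2 <= n, m.*2 <= n,
      (n_odd_rows L == k) || (n_odd_rows L == n - k) &
      (n_odd_cols L == m) || (n_odd_cols L == n - m)].

Definition N n (k m : nat) : nat :=
  #|[set L : array n | latin L && reduced L && parity_type L k m]|.

From mathcomp Require Import all_boot all_order all_algebra all_fingroup.
From mathcomp Require Import ring zify.
Set Implicit Arguments. Unset Strict Implicit. Unset Printing Implicit Defensive.
Import GRing.Theory Num.Theory.
Local Open Scope ring_scope.

(* Write r_i and c_j for the signs of row i and column j of L, and put
   W(L) = par(L) (sum_i r_i) (sum_j c_j).  If k rows of L are odd, then
   prod_i r_i = (-1)^k and sum_i r_i = n - 2k; hence the sum in the statement is the
   sum of W over the reduced Latin squares.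
   Relabelling the symbols of a Latin square and permuting its rows and columns
   multiplies every row sign, column sign and par(L) by signs of the permutations.
   Since n is odd these factors cancel in par(L) r_i c_j, which is merely moved to
   another position (i, j); so the sum of par r_i c_j over all Latin squares does not
   depend on (i, j), and the sum of W over all Latin squares is n^2 times the sum of
   par r_0 c_0.  Every Latin square arises exactly once from a reduced one by a symbol
   relabelling and a row permutation fixing 0; both W and par r_0 c_0 are invariant
   under these, and par r_0 c_0 = par on reduced squares.  Hence the sum of W over
   reduced squares is n^2 (|RELS(n)| - |ROLS(n)|). *)

Lemma card_set_sumz (T : finType) (P Q : pred T) :
  #|[set x | P x && Q x]|%:Z = \sum_(x | P x) (Q x : nat)%:Z.
Proof.
rewrite -sum1dep_card -natz natr_sum big_mkcondr /=.
by apply: eq_bigr => x _; case: (Q x); rewrite ?mulr1n.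
Qed.

Section SignFunctions.
Variables (I : finType) (f : I -> int).
Hypothesis f_sign : forall i, f i = 1 \/ f i = -1.

Lemma prod_sign : \prod_i f i = (-1) ^+ #|[set i | f i == -1]|.
Proof.
rewrite (bigID (fun i => f i == -1)) /= (eq_bigr (fun=> -1)) => [|i /eqP //].
rewrite [X in _ * X]big1 ?mulr1 => [|i]; last by case: (f_sign i) => ->.
by rewrite prodr_const; congr (_ ^+ _); apply: eq_card => i; rewrite inE.
Qed.

Lemma sum_sign : \sum_i f i = #|I|%:Z - 2 * #|[set i | f i == -1]|%:Z.
Proof.
have -> : \sum_i f i = \sum_i (1 - 2 * ((f i == -1) : nat)%:Z).
  by apply: eq_bigr => i _; case: (f_sign i) => ->.
rewrite sumrB sumr_const -mulr_sumr -sum1dep_card; congr (_ - 2 * _); first by rewrite natz.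
rewrite -[in RHS]natz natr_sum [RHS]big_mkcond /=.
by apply: eq_bigr => i _; case: (f i == -1); rewrite ?mulr1n.
Qed.
End SignFunctions.

Definition sign_class (m r k : nat) : bool := (k.*2 <= m)%N && ((r == k) || (r == m - k)%N).

Lemma parity_typeE n (L : array n) k j :
  parity_type L k j = sign_class n (n_odd_rows L) k && sign_class n (n_odd_cols L) j.
Proof.
by rewrite /parity_type /sign_class; case: (_ <= n)%N; case: (_ <= n)%N; rewrite /= ?andbF.
Qed.

Lemma sum_sign_class m r : odd m -> (r <= m)%N ->
  \sum_(k < m | (k.*2 < m)%N) (-1) ^+ k * (m%:Z - 2 * k%:Z) * (sign_class m r k)%:Z =
  (-1) ^+ r * (m%:Z - 2 * r%:Z).
Proof.
move=> m_odd le_rm; have mE : m = (m./2).*2.+1 by rewrite -[LHS]odd_double_half m_odd.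
(* k0 is the unique k with 2k < m in the class of r; 2r = m is ruled out by oddness. *)
pose k0 := if (r.*2 < m)%N then r else (m - r)%N.
have k0_lt : (k0 < m)%N by rewrite /k0; case: ifP; lia.
have classE (k : 'I_m) : (k.*2 < m)%N -> sign_class m r k = (k == Ordinal k0_lt).
  move=> k_half; rewrite /sign_class -val_eqE /= /k0 (ltnW k_half).
  by case: ifP => r_half; apply/idP/idP; lia.
have k0_half : (k0.*2 < m)%N by rewrite /k0; case: ifP; lia.
rewrite (bigD1 (Ordinal k0_lt)) //= big1 => [|k /andP [k_half k_ne]]; last first.
  by rewrite classE // (negbTE k_ne) mulr0.
rewrite (classE (Ordinal k0_lt)) // eqxx mulr1 addr0 /k0.
case: ifP => // r_half.
(* The reflection r -> m - r flips both factors, since m is odd. *)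
have -> : (-1) ^+ (m - r) = - (-1) ^+ r :> int.
  by rewrite -signr_odd oddB // m_odd -[in RHS]signr_odd; case: (odd r); rewrite ?opprK.
have -> : m%:Z - 2 * (m - r)%:Z = - (m%:Z - 2 * r%:Z) by lia.
by rewrite mulrNN.
Qed.

Definition psign n (s : 'S_n) : int := (-1) ^+ odd_perm s.

Lemma psignM n (s t : 'S_n) : psign (s * t)%g = psign s * psign t.
Proof. by rewrite /psign odd_permM signr_addb. Qed.

Lemma osign_pick_inverse n (f : 'I_n -> 'I_n) (s : 'S_n) : f =1 s ->
  osign [pick t : 'S_n | [forall j, t (f j) == j]] = psign s.
Proof.
move=> fE; case: pickP => [t /forallP tf | no_t]; last first.
  by have /negP[] := no_t s^-1%g; apply/forallP => j; rewrite fE permK.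
have -> : t = s^-1%g.
  by apply/permP => x; rewrite -[x in t x](permKV s) -fE (eqP (tf _)).
by rewrite /= /psign odd_permV.
Qed.

Lemma osign_sign n (o : option 'S_n) : osign o = 1 \/ osign o = -1.
Proof. by case: o => [s|] /=; [case: (odd_perm s); [right|left] | left]. Qed.

Lemma fibers_card1_inj (T T' : finType) (f : T -> T') :
  (forall s, #|[set j | f j == s]| = 1%N) -> injective f.
Proof.
move=> f1 a b fab; have /eqP/cards1P [x fx] := f1 (f a).
have : a \in [set j | f j == f a] by rewrite inE.
have : b \in [set j | f j == f a] by rewrite inE fab.
by rewrite fx !inE => /eqP -> /eqP ->.
Qed.

Lemma inj_fibers_card1 (T : finType) (f : T -> T) :
  injective f -> forall s, #|[set j | f j == s]| = 1%N.
Proof.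
move=> f_inj s; have /codomP [j0 ->] : s \in codom f by rewrite (inj_card_onto f_inj).
rewrite (_ : [set j | f j == f j0] = [set j0]) ?cards1 //.
by apply/setP => j; rewrite !inE (inj_eq f_inj).
Qed.

Lemma latinP n (L : array n) :
  latin L <-> (forall r, injective (L r)) /\ (forall c, injective (L^~ c)).
Proof.
split=> [/andP [/forallP rowsL /forallP colsL] | [rowsL colsL]].
  split=> x; apply: fibers_card1_inj => s; apply/eqP.
    by move/forallP: (rowsL x); apply.
  by move/forallP: (colsL x); apply.
by apply/andP; split; apply/forallP => x; apply/forallP => s; apply/eqP;
  exact: inj_fibers_card1.
Qed.

Lemma reducedP n (L : array n.+1) :
  reduced L <-> (forall j, L ord0 j = j) /\ (forall i, L i ord0 = i).
Proof.
split=> [/andP [/forallP row0 /forallP col0] | [row0 col0]].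
  split=> [j | i]; first by move/forallP/(_ j)/implyP/(_ isT)/eqP: (row0 ord0).
  by move/forallP/(_ ord0)/implyP/(_ isT)/eqP: (col0 i).
apply/andP; split; apply/forallP => i; apply/forallP => j; apply/implyP => /eqP /= x0.
  by rewrite (_ : i = ord0) ?row0 //; apply: val_inj.
by rewrite (_ : j = ord0) ?col0 //; apply: val_inj.
Qed.

Lemma par_sign n (L : array n) : par L = 1 \/ par L = -1.
Proof.
rewrite /par !prod_sign => [|i|i]; try exact: osign_sign.
by rewrite -exprD -signr_odd; case: (odd _); [right | left].
Qed.

Lemma card_RELS_sub_ROLS n :
  #|RELS n|%:Z - #|ROLS n|%:Z = \sum_(L : array n | latin L && reduced L) par L.
Proof.
rewrite /RELS /ROLS (card_set_sumz _ (fun L => par L == 1)).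
rewrite (card_set_sumz _ (fun L => par L == -1)) -sumrB.
by apply: eq_bigr => L _; case: (par_sign L) => ->.
Qed.

Section Isotopy.
Variable n : nat.
Local Notation m := n.+1.
Implicit Types L R : array m.
Local Notation row_sign L r := (osign (row_sigma L r)).
Local Notation col_sign L c := (osign (col_sigma L c)).

Definition isotope (g a b : 'S_m) L : array m := \matrix_(i, j) g (L (a i) (b j)).

Lemma isotopeE g a b L i j : isotope g a b L i j = g (L (a i) (b j)).
Proof. by rewrite mxE. Qed.

Lemma isotopeK g a b : cancel (isotope g a b) (isotope g^-1 a^-1 b^-1)%g.
Proof. by move=> L; apply/matrixP => i j; rewrite !isotopeE !permKV permK. Qed.

Lemma isotope_inj g a b : injective (isotope g a b).
Proof. exact: can_inj (isotopeK g a b). Qed.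

Lemma latin_isotope g a b L : latin L -> latin (isotope g a b L).
Proof.
case/latinP => rowsL colsL; apply/latinP; split.
  by move=> r x y; rewrite !isotopeE => /perm_inj /rowsL /perm_inj.
by move=> c x y; rewrite !isotopeE => /perm_inj /colsL /perm_inj.
Qed.

Lemma latin_isotopeE g a b L : latin (isotope g a b L) = latin L.
Proof.
apply/idP/idP => [/(latin_isotope g^-1 a^-1 b^-1)%g | ]; last exact: latin_isotope.
by rewrite isotopeK.
Qed.

Lemma row_sign_isotope g a b L r : latin L ->
  row_sign (isotope g a b L) r = psign g * row_sign L (a r) * psign b.
Proof.
case/latinP => /(_ (a r)) rowL _; set rho := perm rowL.
rewrite /row_sigma (osign_pick_inverse (f := L (a r)) (s := rho)) => [|j]; last by rewrite permE.
rewrite (osign_pick_inverse (s := b * rho * g)%g) => [|j]; last by rewrite isotopeE !permM permE.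
by rewrite !psignM; ring.
Qed.

Lemma col_sign_isotope g a b L c : latin L ->
  col_sign (isotope g a b L) c = psign g * psign a * col_sign L (b c).
Proof.
case/latinP => _ /(_ (b c)) colL; set kappa := perm colL.
rewrite /col_sigma (osign_pick_inverse (f := L^~ (b c)) (s := kappa)) => [|i];
  last by rewrite permE.
rewrite (osign_pick_inverse (s := a * kappa * g)%g) => [|i]; last by rewrite isotopeE !permM permE.
by rewrite !psignM; ring.
Qed.

Lemma big_perm_index (R : Type) (idx : R) (op : Monoid.com_law idx) (a : 'S_m)
    (F : 'I_m -> R) :
  \big[op/idx]_r F (a r) = \big[op/idx]_r F r.
Proof. by rewrite [RHS](reindex_inj (@perm_inj _ a)). Qed.

Definition anchored_pairs := [set p : 'S_m * 'S_m | p.2 ord0 == ord0].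

Definition frames := [set x : ('S_m * 'S_m) * array m |
  (x.1 \in anchored_pairs) && (latin x.2 && reduced x.2)].

Definition frame_isotope (x : ('S_m * 'S_m) * array m) := isotope x.1.1 x.1.2 1 x.2.

Lemma frame_isotope_inj : {in frames &, injective frame_isotope}.
Proof.
move=> [[g1 a1] R1] [[g2 a2] R2]; rewrite !inE /=.
move=> /andP [/eqP a1_0 /andP [_ /reducedP [row1 col1]]].
move=> /andP [/eqP a2_0 /andP [_ /reducedP [row2 col2]]] /matrixP eqL.
have {}eqL i j : g1 (R1 (a1 i) j) = g2 (R2 (a2 i) j).
  by have := eqL i j; rewrite !isotopeE !perm1.
have eq_g : g1 = g2 by apply/permP => j; have := eqL ord0 j; rewrite a1_0 a2_0 row1 row2.
subst g2; have eq_a : a1 = a2.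
  by apply/permP => i; have := eqL i ord0; rewrite col1 col2 => /perm_inj.
subst a2; congr (_, _); apply/matrixP => i j.
by have := eqL (a1^-1%g i) j; rewrite permKV => /perm_inj.
Qed.

Lemma frame_isotope_image : frame_isotope @: frames = [set L | latin L].
Proof.
apply/setP => L; rewrite inE; apply/imsetP/idP.
  by case=> [[[g a] R]]; rewrite inE /= => /andP [_ /andP [latinR _]] ->; exact: latin_isotope.
move=> latinL; have [/(_ ord0) row0 colsL] := (latinP L).1 latinL.
(* Relabel symbols so that row 0 reads 0..n, then reorder rows so that column 0 does. *)
set gam := (perm row0)^-1%g.
have gamE j : gam (L ord0 j) = j by rewrite -[L ord0 j](permE row0) permK.
have kap_inj : injective (fun i => gam (L i ord0)) by move=> x y /perm_inj /colsL.
set kap := perm kap_inj.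
have kap0 : kap ord0 = ord0 by rewrite permE gamE.
have kapV0 : kap^-1%g ord0 = ord0 by rewrite -{1}kap0 permK.
exists ((gam^-1, kap), isotope gam kap^-1 1 L)%g.
  rewrite inE /= inE kap0 eqxx latin_isotope //=; apply/reducedP; split=> [j | i].
    by rewrite isotopeE kapV0 perm1 gamE.
  by rewrite isotopeE perm1 -[RHS](permKV kap i) [in RHS]permE.
by apply/matrixP => i j; rewrite /frame_isotope /= !isotopeE !perm1 !permK.
Qed.

Lemma sum_latin_frames (h : array m -> int) :
  (forall (g a : 'S_m) R, a ord0 = ord0 -> latin R -> reduced R -> h (isotope g a 1 R) = h R) ->
  \sum_(L | latin L) h L = (\sum_(R | latin R && reduced R) h R) *+ #|anchored_pairs|.
Proof.
move=> h_inv; rewrite -sumr_const (pair_big_dep (mem anchored_pairs)) /=.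
transitivity (\sum_(x in frames) h (frame_isotope x)); last first.
  apply: eq_big => [x|[[g a] R]]; first by rewrite inE.
  by rewrite inE /= inE => /andP [/eqP a0 /andP [latinR redR]]; exact: h_inv.
rewrite -(big_imset _ frame_isotope_inj).
by apply: eq_bigl => L; rewrite frame_isotope_image inE.
Qed.

Hypothesis m_odd : odd m.

Lemma psignX_odd (s : 'S_m) : psign s ^+ m = psign s.
Proof. by rewrite /psign; case: (odd_perm s); rewrite ?expr1n // expr1 -signr_odd m_odd. Qed.

Lemma par_isotope g a b L : latin L ->
  par (isotope g a b L) = psign a * psign b * par L.
Proof.
move=> latinL; rewrite /par.
under eq_bigr => r _ do rewrite row_sign_isotope //.
under [X in _ * X]eq_bigr => c _ do rewrite col_sign_isotope //.
rewrite !big_split /= !prodr_const !card_ord !psignX_odd.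
rewrite (big_perm_index _ a (fun r => row_sign L r)) (big_perm_index _ b (fun c => col_sign L c)).
by rewrite /psign; case: (odd_perm g); case: (odd_perm a); case: (odd_perm b);
  rewrite /= ?expr1 ?expr0; ring.
Qed.

Definition cross_sign i j L := par L * row_sign L i * col_sign L j.

Definition weight L := par L * (\sum_r row_sign L r) * (\sum_c col_sign L c).

Lemma weight_cross_sign L : weight L = \sum_i \sum_j cross_sign i j L.
Proof.
rewrite /weight [par L * _]mulr_sumr mulr_suml; apply: eq_bigr => i _.
by rewrite mulr_sumr; apply: eq_bigr.
Qed.

Lemma cross_sign_isotope g a b i j L : latin L ->
  cross_sign i j (isotope g a b L) = cross_sign (a i) (b j) L.
Proof.
move=> latinL; rewrite /cross_sign par_isotope // row_sign_isotope // col_sign_isotope //.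
by rewrite /psign; case: (odd_perm g); case: (odd_perm a); case: (odd_perm b);
  rewrite /= ?expr1 ?expr0; ring.
Qed.

Lemma weight_isotope g a b L : latin L -> weight (isotope g a b L) = weight L.
Proof.
move=> latinL; rewrite !weight_cross_sign.
under eq_bigr => i _ do under eq_bigr => j _ do rewrite cross_sign_isotope //.
rewrite (big_perm_index _ a (fun i => \sum_j cross_sign i (b j) L)).
by apply: eq_bigr => i _; rewrite (big_perm_index _ b (cross_sign i ^~ L)).
Qed.

Lemma cross_sign00_reduced R : reduced R -> cross_sign ord0 ord0 R = par R.
Proof.
case/reducedP => row0 col0; rewrite /cross_sign /row_sigma /col_sigma.
rewrite (osign_pick_inverse (f := R ord0) (s := 1%g)) => [|j]; last by rewrite row0 perm1.
rewrite (osign_pick_inverse (s := 1%g)) => [|i]; last by rewrite col0 perm1.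
by rewrite /psign odd_perm1 !mulr1.
Qed.

Lemma sum_cross_sign i j :
  \sum_(L | latin L) cross_sign i j L = \sum_(L | latin L) cross_sign ord0 ord0 L.
Proof.
rewrite [RHS](reindex_inj (@isotope_inj 1 (tperm ord0 i) (tperm ord0 j))).
apply: eq_big => L; first by rewrite latin_isotopeE.
by move=> latinL; rewrite cross_sign_isotope // !tpermL.
Qed.

Lemma sum_weight_reduced :
  \sum_(R | latin R && reduced R) weight R =
  (m * m)%:R * \sum_(R : array m | latin R && reduced R) par R.
Proof.
have anchored_gt0 : (0 < #|anchored_pairs|)%N.
  by apply/card_gt0P; exists (1, 1)%g; rewrite inE perm1.
apply: (pmulrnI anchored_gt0); rewrite -mulrnAr.
rewrite -sum_latin_frames => [|g a R _ latinR _]; last exact: weight_isotope.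
have -> : \sum_(R : array m | latin R && reduced R) par R =
          \sum_(R | latin R && reduced R) cross_sign ord0 ord0 R.
  by apply: eq_bigr => R /andP [_ /cross_sign00_reduced ->].
rewrite -sum_latin_frames => [|g a R a0 latinR _]; last by rewrite cross_sign_isotope // a0 perm1.
under eq_bigr => L _ do rewrite weight_cross_sign.
rewrite exchange_big; under eq_bigr => i _ do rewrite exchange_big.
under eq_bigr => i _ do under eq_bigr => j _ do rewrite sum_cross_sign.
by rewrite !sumr_const !card_ord -mulrnA mulr_natl.
Qed.

Lemma weight_parity_type L :
  weight L = \sum_(k < m | (k.*2 < m)%N) \sum_(j < m | (j.*2 < m)%N)
    (-1) ^+ (k + j) * (m%:Z - 2 * k%:Z) * (m%:Z - 2 * j%:Z) * (parity_type L k j : nat)%:Z.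
Proof.
have rows_le : (n_odd_rows L <= m)%N by rewrite (leq_trans (max_card _)) ?card_ord.
have cols_le : (n_odd_cols L <= m)%N by rewrite (leq_trans (max_card _)) ?card_ord.
have row_factor : (\prod_r row_sign L r) * (\sum_r row_sign L r) =
    (-1) ^+ n_odd_rows L * (m%:Z - 2 * (n_odd_rows L)%:Z).
  by rewrite prod_sign ?sum_sign ?card_ord // => r; exact: osign_sign.
have col_factor : (\prod_c col_sign L c) * (\sum_c col_sign L c) =
    (-1) ^+ n_odd_cols L * (m%:Z - 2 * (n_odd_cols L)%:Z).
  by rewrite prod_sign ?sum_sign ?card_ord // => c; exact: osign_sign.
have -> : weight L = (\prod_r row_sign L r * \sum_r row_sign L r) *
                     (\prod_c col_sign L c * \sum_c col_sign L c) by rewrite /weight /par; ring.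
rewrite row_factor col_factor -(sum_sign_class m_odd rows_le) -(sum_sign_class m_odd cols_le).
rewrite mulr_suml; apply: eq_bigr => k _; rewrite mulr_sumr; apply: eq_bigr => j _.
rewrite parity_typeE exprD.
by case: (sign_class _ _ k); case: (sign_class _ _ j); rewrite /= ?mulr0 ?mul0r ?mulr1; ring.
Qed.

Lemma alternating_N_sum :
  \sum_(k < m | (k.*2 < m)%N) \sum_(j < m | (j.*2 < m)%N)
     ((-1) ^+ (k + j) * (m%:Z - 2 * k%:Z) * (m%:Z - 2 * j%:Z) * (N m k j)%:Z : int)
  = (m * m)%:R * (#|RELS m|%:Z - #|ROLS m|%:Z).
Proof.
rewrite card_RELS_sub_ROLS -sum_weight_reduced.
under eq_bigr => k _ do under eq_bigr => j _ do
  rewrite /N (card_set_sumz _ (fun L => parity_type L k j)) mulr_sumr.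
under eq_bigr => k _ do rewrite exchange_big.
by rewrite exchange_big; apply: eq_bigr => L _; rewrite weight_parity_type.
Qed.
End Isotopy.

Theorem proposition3p3 (n : nat) (hn : odd n) :
  #|RELS n| <> #|ROLS n| <->
  \sum_(k < n | (k.*2 < n)%N) \sum_(m < n | (m.*2 < n)%N)
     ((-1) ^+ (k + m) * (n%:Z - 2 * k%:Z) * (n%:Z - 2 * m%:Z) * (N n k m)%:Z : int)
  <> 0.
Proof.
case: n hn => [//|n] hn; rewrite (alternating_N_sum hn).
have sq_neq0 : ((n.+1 * n.+1)%:R : int) != 0 by rewrite pnatr_eq0.
split=> [neq_card /eqP | neq_sum eq_card]; last by apply: neq_sum; rewrite eq_card subrr mulr0.
by rewrite mulf_eq0 (negbTE sq_neq0) subr_eq0 => /eqP [].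
Qed.
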